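(* Let $\mathcal G=(\mathcal V,\mathcal E)$ be a connected undirected graph on $\mathcal V=\{1,\dots,N\}$, and fix a node $i\in\{1,\dots,N-1\}$. Let $\widehat q_i$ be the $i$-th entry of the unweighted least-squares estimate $\widehat{\mathbf q}=\mathbf M^{-1}(\mathbf H\odot\widehat{\mathbf D})\mathbf 1$ on $\mathcal G$ (defined in the context). Consider the directed graph $\overrightarrow{\mathcal G}_i=(\mathcal V,\overrightarrow{\mathcal E}_i)$ and the probabilities $\eta_{j\to\ell,i}$ defined in the context, and let $(\check q_j)$ be the solution of the linear system $$\check q_N=0,\qquad \check q_j=\sum_{\ell\in\mathcal N^-_{ji}}(\check q_\ell+\widehat d_{j,\ell})\,\eta_{j\to\ell,i}$$ on $\overrightarrow{\mathcal G}_i$. Then $\widehat q_i=\check q_i$.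
   Context: Setting: $\widehat d_{j,\ell}$, $(j,\ell)\in\mathcal E$, are given real numbers with $\widehat d_{\ell,j}=-\widehat d_{j,\ell}$ (noisy estimates of quality differences $q_j-q_\ell$), and $\widehat{\mathbf D}=\{\widehat d_{j,\ell}\}$. Let $\rho_j$ be the degree of node $j$ in $\mathcal G$; $[\mathbf H]_{j,\ell}=1/\rho_j$ if $j<N$ and $(j,\ell)\in\mathcal E$, $0$ otherwise; $\mathbf M=\mathbf I-\mathbf H$ (invertible); $\odot$ is the Hadamard product and $\mathbf 1$ the all-ones vector. Let $\mathbf T$ be the $(N-1)\times(N-1)$ matrix obtained from $\mathbf H$ by removing its last row and column, and define for $j<N$: $\theta_{j,i}=\frac{[(\mathbf I-\mathbf T)^{-1}]_{i,j}}{\rho_j}$ (the average number of times an edge incident to $j$ is traversed from $j$ by the standard random walk on $\mathcal G$ started at $i$ and stopped at $N$), and $\theta_{N,i}=0$. The directed graph $\overrightarrow{\mathcal G}_i=(\mathcal V,\overrightarrow{\mathcal E}_i)$ has $(j,\ell)\in\overrightarrow{\mathcal E}_i$ iff $(j,\ell)\in\mathcal E$ and either ($j<N$ and $\ell=N$) or ($j<N$, $\ell<N$ and $\theta_{j,i}>\theta_{\ell,i}$). Let $\mathcal N^-_{ji}=\{\ell:(j,\ell)\in\overrightarrow{\mathcal E}_i\}$ (called the in-neighbors of $j$ in the paper). For $\ell\in\mathcal N^-_{ji}$, $\eta_{j\to\ell,i}=\frac{\theta_{j,i}-\theta_{\ell,i}}{\sum_{\ell'\in\mathcal N^-_{ji}}(\theta_{j,i}-\theta_{\ell',i})}$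 (transition probabilities of a biased random walk on $\overrightarrow{\mathcal G}_i$). *)

(* Nodes 1..N are modelled by 'I_N with N = n.+1;
   the paper's node N (the anchor) is ord_max. *)
From mathcomp Require Import all_boot all_order all_algebra.
Set Implicit Arguments. Unset Strict Implicit. Unset Printing Implicit Defensive.
Import Order.TTheory GRing.Theory Num.Theory.
Local Open Scope ring_scope.

Section Defs.
Variables (R : realFieldType) (n : nat).
Notation V := 'I_n.+1.
Variable e : rel V.

Definition rho (j : V) : nat := #|[set l | e j l]|.

Definition Hmx : 'M[R]_n.+1 :=
  \matrix_(j, l) (if (j != ord_max) && e j l then ((rho j)%:R)^-1 else 0).

Definition Mmx : 'M[R]_n.+1 := 1%:M - Hmx.

Definition hadamard (A B : 'M[R]_n.+1) : 'M[R]_n.+1 :=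
  \matrix_(j, l) (A j l * B j l).

Definition qhat (D : 'M[R]_n.+1) : 'cV[R]_n.+1 :=
  invmx Mmx *m (hadamard Hmx D *m const_mx 1).

Definition Tmx : 'M[R]_n :=
  \matrix_(a, b) Hmx (widen_ord (leqnSn n) a) (widen_ord (leqnSn n) b).

(* theta_{j,i} for i a node among 1..N-1 (given as i : 'I_n) *)
Definition theta (i : 'I_n) (j : V) : R :=
  match unlift ord_max j with
  | Some j' => invmx (1%:M - Tmx) i j' / (rho j)%:R
  | None => 0
  end.

Definition dedge (i : 'I_n) (j l : V) : bool :=
  [&& e j l, j != ord_max & (l == ord_max) || (theta i l < theta i j)].

Definition eta (i : 'I_n) (j l : V) : R :=
  (theta i j - theta i l) / \sum_(l' | dedge i j l') (theta i j - theta i l').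

End Defs.

From mathcomp Require Import all_boot all_order all_algebra.
From mathcomp Require Import lra.
Set Implicit Arguments.
Unset Strict Implicit.
Unset Printing Implicit Defensive.

Import Order.TTheory GRing.Theory Num.Theory.
Local Open Scope ring_scope.

(** The vector theta_{.,i} is the Green function of the graph Laplacian with
    Dirichlet condition at the anchor N: it vanishes at N, its Laplacian is
    the indicator of i elsewhere, and it is nonnegative by the minimum
    principle.  Hence f_{jl} = theta_j - theta_l on the edges of G_i is a unit
    flow from i to N, and eta_{j->l} = f_{jl} / (outflow of j).  Multiplying
    the equation defining qc_j by the outflow of j and summing over j,
    conservation of f leaves qc_i = sum f_{jl} d_{jl}.  On the other side the
    i-th row of M^-1 is (rho_j theta_j)_j, so qhat_i = sum_{j~l} theta_j d_{jl},
    which the antisymmetry of d turns into the same edge sum. *)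

Section Laplacian.
Variables (R : realDomainType) (T : finType) (e : rel T).

Definition laplacian (x : T -> R) (j : T) : R := \sum_(k | e j k) (x j - x k).

Lemma laplacianN (x : T -> R) j : laplacian (fun k => - x k) j = - laplacian x j.
Proof.
by rewrite /laplacian -sumrN; apply: eq_bigr => k _; rewrite opprK opprB addrC.
Qed.

Hypotheses (e_sym : symmetric e) (e_conn : forall x y : T, connect e x y).

Lemma maximum_principle (a : T) (x : T -> R) : x a = 0 ->
  (forall j, j != a -> laplacian x j <= 0) -> forall j, x j <= 0.
Proof.
move=> xa0 Lx_le0.
have [m _ x_le_m] := arg_maxP x (isT : predT a).
suff xm_le0 : x m <= 0 by move=> j; exact: le_trans (x_le_m j isT) xm_le0.
rewrite leNgt; apply/negP => xm_gt0.
have max_step u v : e u v -> x u = x m -> x v = x m.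
  move=> euv xu.
  have ua : u != a by apply: contraTneq xm_gt0 => ua; rewrite -xu ua xa0 ltxx.
  have gaps_ge0 k : e u k -> 0 <= x u - x k by rewrite xu subr_ge0 => _; exact: x_le_m.
  have gaps0 : laplacian x u = 0 by apply/le_anti; rewrite Lx_le0 // sumr_ge0.
  by apply/eqP; rewrite -xu eq_sym -subr_eq0 (psumr_eq0P gaps_ge0 gaps0).
have max_closed : closed e [pred k | x k == x m].
  move=> u v euv; rewrite !inE.
  by apply/eqP/eqP => [|]; [exact: max_step | apply: max_step; rewrite e_sym].
have := closed_connect max_closed (e_conn m a).
by rewrite !inE eqxx xa0 => /esym/eqP xm0; rewrite -xm0 ltxx in xm_gt0.
Qed.

Lemma minimum_principle (a : T) (x : T -> R) : x a = 0 ->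
  (forall j, j != a -> 0 <= laplacian x j) -> forall j, 0 <= x j.
Proof.
move=> xa0 Lx_ge0 j; rewrite -oppr_le0.
apply: (maximum_principle (x := fun k => - x k) (a := a)) => [|k ka].
  by rewrite xa0 oppr0.
by rewrite laplacianN oppr_le0 Lx_ge0.
Qed.

Lemma harmonic_eq0 (a : T) (x : T -> R) : x a = 0 ->
  (forall j, j != a -> laplacian x j = 0) -> forall j, x j = 0.
Proof.
move=> xa0 Lx0 j; apply/le_anti.
rewrite (maximum_principle xa0) ?(minimum_principle xa0) // => k ka; by rewrite Lx0.
Qed.

End Laplacian.

Section UnitFlow.
Variables (R : ringType) (T : finType).

Lemma potential_of_unit_flow (s t : T) (f c : T -> T -> R) (q : T -> R) :
  q t = 0 ->
  (forall j, j != t -> \sum_l f j l - \sum_l f l j = (j == s)%:R) ->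
  (forall j, (\sum_l f j l) * q j = \sum_l f j l * (q l + c j l)) ->
  q s = \sum_j \sum_l f j l * c j l.
Proof.
move=> qt0 conservation balance.
have delta_q : \sum_l (l == s)%:R * q l = q s.
  by rewrite (bigD1 s) //= eqxx mul1r big1 ?addr0 // => l /negbTE ->; rewrite mul0r.
have inflow_swap : \sum_l (\sum_j f j l) * q l = \sum_j \sum_l f j l * q l.
  by rewrite exchange_big; apply: eq_bigr => l _; rewrite mulr_suml.
have inflow_q l : (\sum_j f j l) * q l + (l == s)%:R * q l = (\sum_j f l j) * q l.
  have [->|lt] := eqVneq l t; first by rewrite qt0 !mulr0 addr0.
  by rewrite -mulrDl -(conservation l lt) addrC subrK.
apply: (@addrI _ (\sum_j \sum_l f j l * q l)).
transitivity (\sum_j (\sum_l f j l) * q j).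
  by rewrite -inflow_swap -delta_q -big_split /=; apply: eq_bigr => l _; rewrite inflow_q.
rewrite -big_split /=; apply: eq_bigr => j _.
by rewrite balance -big_split /=; apply: eq_bigr => l _; rewrite mulrDr.
Qed.

Lemma sum_swap_antisym (e : rel T) (F D : T -> T -> R) :
  (forall j l, ~~ e j l -> F j l = 0) -> (forall j l, e j l -> D l j = - D j l) ->
  \sum_j \sum_l F l j * D j l = - \sum_j \sum_l F j l * D j l.
Proof.
move=> F_supp D_anti; rewrite exchange_big -sumrN; apply: eq_bigr => j _.
rewrite -sumrN; apply: eq_bigr => l _.
by have [/D_anti ->|/F_supp ->] := boolP (e j l); rewrite ?mulrN // !mul0r oppr0.
Qed.

End UnitFlow.

Lemma invmx_left (R : comUnitRingType) m (A B : 'M[R]_m) :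
  B *m A = 1%:M -> invmx A = B.
Proof.
move=> BA1; have [_ A_unit] := mulmx1_unit BA1.
by rewrite -[B]mulmx1 -(mulmxV A_unit) mulmxA BA1 mul1mx.
Qed.

Section AnchoredGraph.
Variables (R : realFieldType) (n : nat) (e : rel 'I_n.+1).

Local Notation w := (widen_ord (leqnSn n)).
Local Notation H := (Hmx R e).
Local Notation M := (Mmx R e).

Lemma laplacianE (x : 'I_n.+1 -> R) j :
  laplacian e x j = x j *+ rho e j - \sum_(k | e j k) x k.
Proof.
rewrite /laplacian sumrB; congr (_ - _).
by rewrite /rho -sumr_const; apply: eq_bigl => k; rewrite inE.
Qed.

Lemma sum_Hmx (x : 'I_n.+1 -> R) j : j != ord_max ->
  \sum_k H j k * x k = (\sum_(k | e j k) x k) / (rho e j)%:R.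
Proof.
move=> jN; rewrite mulr_suml [RHS]big_mkcond; apply: eq_bigr => k _.
by rewrite mxE jN; case: (e j k); rewrite ?mul0r // mulrC.
Qed.

Hypotheses (e_sym : symmetric e) (e_conn : forall x y, connect e x y).
Hypothesis n_gt0 : (0 < n)%N.

Lemma rho_gt0 j : (0 < rho e j)%N.
Proof.
have [k kj] : exists k, k != j.
  have [->|jN] := eqVneq j ord_max; last by exists ord_max; rewrite eq_sym.
  by exists ord0; rewrite -val_eqE /= neq_ltn n_gt0.
case/connectP: (e_conn j k) => -[/= _ kj'|l p /= /andP[ejl _] _].
  by rewrite kj' eqxx in kj.
by apply/card_gt0P; exists l; rewrite inE.
Qed.

Lemma rho_neq0 j : (rho e j)%:R != 0 :> R.
Proof. by rewrite pnatr_eq0 -lt0n rho_gt0. Qed.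

Lemma Mmx_mulE (v : 'cV[R]_n.+1) j : j != ord_max ->
  (M *m v) j 0 * (rho e j)%:R = laplacian e (fun k => v k 0) j.
Proof.
move=> jN; rewrite /Mmx mulmxBl mul1mx !mxE sum_Hmx // mulrBl divfK ?rho_neq0 //.
by rewrite mulr_natr laplacianE.
Qed.

Lemma Mmx_unit : M \in unitmx.
Proof.
rewrite -unitmx_tr -row_free_unit; apply: inj_row_free => u uMt0.
have Mu0 : M *m u^T = 0 by rewrite -[M]trmxK -trmx_mul uMt0 trmx0.
apply/rowP => k; rewrite [RHS]mxE.
apply: (harmonic_eq0 e_sym e_conn (a := ord_max) (x := fun j => u 0 j)) => [|j jN].
  have := congr1 (fun v : 'cV_n.+1 => v ord_max 0) Mu0.
  rewrite /Mmx mulmxBl mul1mx !mxE big1 ?subr0 // => l _; by rewrite mxE eqxx mul0r.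
have := Mmx_mulE u^T jN; rewrite Mu0 mxE mul0r => ->.
by apply: eq_bigr => l _; rewrite !mxE.
Qed.

(* The last row of M is that of the identity, so the leading block of M^-1
   inverts the leading block 1 - T of M. *)
Lemma invmx_Tmx (a b : 'I_n) :
  invmx (1%:M - Tmx R e) a b = invmx M (w a) (w b).
Proof.
set W := \matrix_(a, b) invmx M (w a) (w b).
suff -> : invmx (1%:M - Tmx R e) = W by rewrite mxE.
apply: invmx_left; apply/matrixP => {}a {}b.
have := congr1 (fun A : 'M_n.+1 => A (w a) (w b)) (mulVmx Mmx_unit).
have MNw : M ord_max (w b) = 0.
  by rewrite !mxE eqxx -val_eqE /= gtn_eqF ?subr0.
rewrite !mxE big_ord_recr /= MNw mulr0 addr0 => <-.
by apply: eq_bigr => c _; rewrite !mxE.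
Qed.

Variable i : 'I_n.
Local Notation th := (theta R e i).

Lemma theta_max : th ord_max = 0.
Proof. by rewrite /theta unlift_none. Qed.

Lemma invmx_Mmx_theta k : k != ord_max -> invmx M (w i) k = th k * (rho e k)%:R.
Proof.
rewrite eq_sym => /unlift_some[a -> _].
have lift_a : lift ord_max a = w a by apply: ord_inj; rewrite lift_max.
by rewrite /theta liftK divfK ?rho_neq0 // invmx_Tmx lift_a.
Qed.

Lemma laplacian_theta j : j != ord_max -> laplacian e th j = (j == w i)%:R.
Proof.
move=> jN; rewrite eq_sym.
have := congr1 (fun A : 'M_n.+1 => A (w i) j) (mulVmx Mmx_unit).
rewrite [LHS]mxE [RHS]mxE => <-.
have term k : invmx M (w i) k * M k j =
    (if k == j then th k *+ rho e k else 0) - (if e j k then th k else 0).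
  have [-> | kN] := eqVneq k ord_max.
    rewrite theta_max !mxE eqxx [ord_max == j]eq_sym (negbTE jN) /=.
    by rewrite if_same !subr0 mulr0.
  rewrite invmx_Mmx_theta // !mxE kN /= [e k j]e_sym.
  by rewrite mulrBr; case: (k == j); case: (e j k);
    rewrite /= ?mulr1 ?mulr0 ?mulfK ?rho_neq0 ?mulr_natr.
rewrite (eq_bigr _ (fun k _ => term k)) sumrB -!big_mkcond big_pred1_eq /=.
by rewrite laplacianE.
Qed.

Lemma theta_ge0 j : 0 <= th j.
Proof.
apply: (minimum_principle e_sym e_conn (a := ord_max)) => [|k kN].
  exact: theta_max.
by rewrite laplacian_theta // ler0n.
Qed.

Lemma qhatE (D : 'M[R]_n.+1) :
  qhat e D (w i) 0 = \sum_j \sum_l (if e j l then th j else 0) * D j l.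
Proof.
rewrite /qhat mxE; apply: eq_bigr => k _.
have b_k : (hadamard H D *m (const_mx 1 : 'cV[R]_n.+1)) k 0 = \sum_l H k l * D k l.
  by rewrite mxE; apply: eq_bigr => l _; rewrite !mxE mulr1.
rewrite b_k; have [-> | kN] := eqVneq k ord_max.
  by rewrite theta_max !big1 ?mulr0 // => l _; rewrite ?if_same ?mul0r // mxE eqxx mul0r.
rewrite invmx_Mmx_theta // sum_Hmx // -mulrA [_%:R * _]mulrC divfK ?rho_neq0 // mulr_sumr.
by rewrite big_mkcond; apply: eq_bigr => l _; case: (e k l); rewrite ?mul0r.
Qed.

Definition flow (j l : 'I_n.+1) : R := if dedge R e i j l then th j - th l else 0.

Lemma flow_ge0 j l : 0 <= flow j l.
Proof.
rewrite /flow; case: ifP => // /and3P[_ _ /orP[/eqP -> | lt_lj]].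
  by rewrite theta_max subr0 theta_ge0.
by rewrite subr_ge0 ltW.
Qed.

Hypothesis e_irr : irreflexive e.

Lemma flow_skew j l : flow j l - flow l j = if e j l then th j - th l else 0.
Proof.
rewrite /flow /dedge [e l j]e_sym; case ejl: (e j l) => /=; last by rewrite subrr.
have [jN | jN] := eqVneq j ord_max.
  have lN : l != ord_max by apply/eqP => lN; rewrite jN lN e_irr in ejl.
  by rewrite jN lN /= theta_max subr0 sub0r.
have [-> | lN] := eqVneq l ord_max; first by rewrite /= subr0.
by rewrite /=; case: ltgtP => [lt_jl | lt_lj | ->]; rewrite ?subr0 ?sub0r ?opprB ?subrr.
Qed.

Lemma flow_conservation j : j != ord_max ->
  \sum_l flow j l - \sum_l flow l j = (j == w i)%:R.
Proof.
move=> jN; rewrite -sumrB (eq_bigr _ (fun l _ => flow_skew j l)) -big_mkcond.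
exact: laplacian_theta.
Qed.

Lemma flow_eta j l : dedge R e i j l -> (\sum_l' flow j l') * eta R e i j l = flow j l.
Proof.
move=> djl; have flow_jl : flow j l = th j - th l by rewrite /flow djl.
have out_flow : \sum_l' flow j l' = \sum_(l' | dedge R e i j l') (th j - th l').
  by rewrite [RHS]big_mkcond.
rewrite /eta -out_flow -flow_jl.
(* eta divides by the outflow; when that vanishes, so does every flow j l. *)
have [S0 | S_neq0] := eqVneq (\sum_l' flow j l') 0; last by rewrite mulrC divfK.
by rewrite S0 mul0r (psumr_eq0P (fun l _ => flow_ge0 j l) S0).
Qed.

Lemma flow_balance (q : 'I_n.+1 -> R) (c : 'I_n.+1 -> 'I_n.+1 -> R) :
  (forall j, j != ord_max ->
     q j = \sum_(l | dedge R e i j l) (q l + c j l) * eta R e i j l) ->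
  forall j, (\sum_l flow j l) * q j = \sum_l flow j l * (q l + c j l).
Proof.
move=> q_mean j; have [-> | jN] := eqVneq j ord_max.
  have flowN l : flow ord_max l = 0 by rewrite /flow /dedge eqxx andbF.
  by rewrite !big1 ?mul0r // => l _; rewrite flowN mul0r.
rewrite {1}(q_mean j jN) mulr_sumr [LHS]big_mkcond; apply: eq_bigr => l _.
case: ifP => djl; first by rewrite mulrCA flow_eta // mulrC.
by rewrite /flow djl mul0r.
Qed.

Lemma qhat_flow (D : 'M[R]_n.+1) : (forall j l, e j l -> D l j = - D j l) ->
  qhat e D (w i) 0 = \sum_j \sum_l flow j l * D j l.
Proof.
move=> D_anti; rewrite qhatE.
have swap_theta : \sum_j \sum_l (if e j l then th l else 0) * D j l
    = - \sum_j \sum_l (if e j l then th j else 0) * D j l.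
  rewrite -(sum_swap_antisym (e := e)) => [|j l /negbTE -> //|//].
  by apply: eq_bigr => j _; apply: eq_bigr => l _; rewrite e_sym.
have swap_flow : \sum_j \sum_l flow l j * D j l = - \sum_j \sum_l flow j l * D j l.
  by apply: (sum_swap_antisym (e := e)) => // j l /negbTE ejl; rewrite /flow /dedge ejl.
have skew_sum : \sum_j \sum_l (if e j l then th j - th l else 0) * D j l
    = \sum_j \sum_l (if e j l then th j else 0) * D j l
      - \sum_j \sum_l (if e j l then th l else 0) * D j l.
  rewrite -sumrB; apply: eq_bigr => j _; rewrite -sumrB; apply: eq_bigr => l _.
  by case: (e j l); rewrite /= ?mulrBl // !mul0r subrr.
have flow_sum : \sum_j \sum_l (if e j l then th j - th l else 0) * D j l
    = \sum_j \sum_l flow j l * D j l - \sum_j \sum_l flow l j * D j l.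
  rewrite -sumrB; apply: eq_bigr => j _; rewrite -sumrB; apply: eq_bigr => l _.
  by rewrite -mulrBl flow_skew.
move: skew_sum flow_sum; rewrite swap_theta swap_flow => ->; lra.
Qed.

End AnchoredGraph.

Theorem proposition4 (R : realFieldType) (n : nat) (e : rel 'I_n.+1)
  (e_sym : symmetric e) (e_irr : irreflexive e)
  (e_conn : forall x y : 'I_n.+1, connect e x y)
  (D : 'M[R]_n.+1)
  (D_anti : forall j l : 'I_n.+1, e j l -> D l j = - D j l)
  (i : 'I_n)
  (qc : 'I_n.+1 -> R)
  (qc_N : qc ord_max = 0)
  (qc_eq : forall j : 'I_n.+1, j != ord_max ->
     qc j = \sum_(l | dedge R e i j l) (qc l + D j l) * eta R e i j l) :
  qhat e D (widen_ord (leqnSn n) i) 0 = qc (widen_ord (leqnSn n) i).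
Proof.
have n_gt0 : (0 < n)%N by apply: leq_ltn_trans (ltn_ord i).
rewrite (qhat_flow e_sym e_conn n_gt0 i e_irr D_anti); symmetry.
apply: (potential_of_unit_flow (t := ord_max) qc_N).
  exact: flow_conservation.
exact: flow_balance.
Qed.
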